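(* Let $\alpha$ be an equidistributed infinite permutation. Then for every positive integer $N$, $\alpha$ has an $N$-maximal element and an $N$-minimal element.
   Context: An infinite permutation is an equivalence class of sequences $(a[n])_{n\ge0}$ of pairwise distinct reals, where two sequences are equivalent if $a[i]<a[j]\iff b[i]<b[j]$ for all $i,j$; write $\alpha=(\alpha[n])_{n\ge0}$ with the induced order. A sequence $(a[n])$ in $[0,1]$ is equidistributed if $\lim_{n\to\infty}\frac{\#\{0\le i<n:a[i]<t\}}{n}=t$ for each $t\in[0,1]$; a permutation is equidistributed if it has an equidistributed representative in $[0,1]$. An element $\alpha[i]$ with $i>N$ is $N$-maximal (resp. $N$-minimal) if $\alpha[i]>\alpha[j]$ (resp. $\alpha[i]<\alpha[j]$) for all $j\in\{i-N,\dots,i+N\}\setminus\{i\}$. *)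

From Stdlib Require Import Reals Lra Lia.
Open Scope R_scope.

(* A representative of an infinite permutation: a sequence of pairwise distinct reals. *)
Definition pairwise_distinct (a : nat -> R) : Prop :=
  forall i j : nat, i <> j -> a i <> a j.

(* Two sequences represent the same infinite permutation. *)
Definition same_order (a b : nat -> R) : Prop :=
  forall i j : nat, a i < a j <-> b i < b j.

Fixpoint count_below (a : nat -> R) (t : R) (n : nat) : nat :=
  match n with
  | O => O
  | S m => (count_below a t m + (if Rlt_dec (a m) t then 1 else 0))%nat
  end.

Definition equidistributed (a : nat -> R) : Prop :=
  (forall n, 0 <= a n <= 1) /\
  forall t, 0 <= t <= 1 ->
    Un_cv (fun n => INR (count_below a t n) / INR n) t.

Definition equidistributed_perm (a : nat -> R) : Prop :=
  exists b : nat -> R, equidistributed b /\ same_order a b.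

Definition N_maximal (a : nat -> R) (N i : nat) : Prop :=
  (i > N)%nat /\
  forall j : nat, (i - N <= j <= i + N)%nat -> j <> i -> a i > a j.

Definition N_minimal (a : nat -> R) (N i : nat) : Prop :=
  (i > N)%nat /\
  forall j : nat, (i - N <= j <= i + N)%nat -> j <> i -> a i < a j.

(* Pass to an equidistributed representative b in [0,1]. If b had no N-maximal
   element, then for any level t < 1 the maximum of b over [L, K + N - 1] could
   not have N successors inside that interval, so every late window of length N
   would contain an element above t; the set {b > t} would then have density at
   least 1/N, which fails for t = 1 - 1/(2N). Minimal elements are maximal
   elements of 1 - b. *)

From Stdlib Require Import Reals Lra Lia Classical.
Open Scope R_scope.

Fixpoint count (P : nat -> bool) (n : nat) : nat :=
  match n with
  | O => O
  | S m => (count P m + (if P m then 1 else 0))%nat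
  end.

Definition has_density (P : nat -> bool) (d : R) : Prop :=
  Un_cv (fun n => INR (count P n) / INR n) d.

Definition below (b : nat -> R) (t : R) (k : nat) : bool :=
  if Rlt_dec (b k) t then true else false.

Lemma count_below_count (b : nat -> R) (t : R) (n : nat) :
  count_below b t n = count (below b t) n.
Proof.
induction n as [|n IH]; simpl; [reflexivity|].
rewrite IH; unfold below; destruct (Rlt_dec (b n) t); reflexivity.
Qed.

Lemma count_le_mono (P : nat -> bool) (m n : nat) :
  (m <= n)%nat -> (count P m <= count P n)%nat.
Proof. induction 1; simpl; lia. Qed.

Lemma count_add_compl (P : nat -> bool) (n : nat) :
  (count P n + count (fun k => negb (P k)) n)%nat = n.
Proof. induction n as [|n IH]; simpl; [|destruct (P n); simpl]; lia. Qed.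

Lemma has_density_compl (P : nat -> bool) (d : R) :
  has_density P d -> has_density (fun k => negb (P k)) (1 - d).
Proof.
intros HP e He; destruct (HP e He) as [n0 Hn0]; exists (S n0); intros n Hn.
assert (Hn_pos : 0 < INR n) by (apply lt_0_INR; lia).
assert (Hsum := count_add_compl P n).
apply (f_equal INR) in Hsum; rewrite plus_INR in Hsum.
replace (INR (count (fun k => negb (P k)) n)) with
  (INR n - INR (count P n)) by lra.
replace ((INR n - INR (count P n)) / INR n) with
  (1 - INR (count P n) / INR n) by (field; lra).
unfold R_dist in *.
replace (1 - INR (count P n) / INR n - (1 - d)) with
  (- (INR (count P n) / INR n - d)) by ring.
rewrite Rabs_Ropp; apply Hn0; lia.
Qed.

Definition meets_windows (P : nat -> bool) (K0 N : nat) : Prop :=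
  forall K, (K0 <= K)%nat -> exists k, (K <= k < K + N)%nat /\ P k = true.

Lemma count_meets_windows (P : nat -> bool) (K0 N : nat) :
  meets_windows P K0 N -> forall q, (q <= count P (K0 + q * N))%nat.
Proof.
intros HP q; induction q as [|q IH]; [lia|].
destruct (HP (K0 + q * N)%nat ltac:(lia)) as [k [Hk Pk]].
assert (count P (S k) <= count P (K0 + S q * N))%nat by (apply count_le_mono; lia).
assert (count P (K0 + q * N) <= count P k)%nat by (apply count_le_mono; lia).
simpl in *; rewrite Pk in *; lia.
Qed.

Lemma meets_windows_density_ge (P : nat -> bool) (d : R) (K0 N : nat) :
  (0 < N)%nat -> meets_windows P K0 N -> has_density P d -> / INR N <= d.
Proof.
intros HN HP Hd; apply Rnot_lt_le; intro Hlt.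
set (e := (/ INR N - d) / 2).
assert (He : e > 0) by (unfold e; lra).
destruct (Hd e He) as [n0 Hn0].
destruct (INR_archimed e (INR K0) He) as [q0 Hq0].
set (q := (q0 + n0 + 1)%nat).
set (n := (K0 + q * N)%nat).
assert (HN1 : 1 <= INR N) by (apply (le_INR 1); lia).
assert (Hq0q : INR q0 <= INR q) by (apply le_INR; unfold q; lia).
assert (Hq1 : 1 <= INR q) by (apply (le_INR 1); unfold q; lia).
assert (HK0 := pos_INR K0).
assert (Hn : INR n = INR K0 + INR q * INR N)
  by (unfold n; rewrite plus_INR, mult_INR; reflexivity).
assert (Hcount : INR q / INR n <= INR (count P n) / INR n).
{ apply Rmult_le_compat_r.
  - apply Rlt_le, Rinv_0_lt_compat; nra.
  - apply le_INR, count_meets_windows, HP. }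
(* [q / (K0 + q N) > 1/N - e] as soon as [K0 < q e] *)
assert (Hratio : / INR N - e < INR q / INR n).
{ rewrite Hn; apply Rlt_0_minus.
  replace (INR q / (INR K0 + INR q * INR N) - (/ INR N - e)) with
    ((e * INR N * (INR K0 + INR q * INR N) - INR K0) /
     (INR N * (INR K0 + INR q * INR N))) by (field; nra).
  assert (1 <= INR N * INR N) by nra.
  assert (0 <= INR q * e * (INR N * INR N - 1)) by
    (apply Rmult_le_pos; [apply Rmult_le_pos|]; lra).
  assert (0 <= e * INR N * INR K0) by (apply Rmult_le_pos; [|lra]; nra).
  apply Rdiv_lt_0_compat; nra. }
specialize (Hn0 n ltac:(unfold n, q; nia)); unfold R_dist in Hn0.
apply Rabs_def2 in Hn0; unfold e in *; lra.
Qed.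

Lemma equidistributed_density_below (b : nat -> R) (t : R) :
  equidistributed b -> 0 <= t <= 1 -> has_density (below b t) t.
Proof.
intros [_ Hcv] Ht e He; destruct (Hcv t Ht e He) as [n0 Hn0].
exists n0; intros n Hn; rewrite <- count_below_count; auto.
Qed.

Lemma cofinite_meets_windows (P : nat -> bool) (M : nat) :
  (forall k, (M <= k)%nat -> P k = true) -> meets_windows P M 1.
Proof. intros HP K HK; exists K; split; [lia | apply HP; lia]. Qed.

Lemma equidistributed_cofinal_above (b : nat -> R) (c : R) (M : nat) :
  equidistributed b -> 0 <= c < 1 -> exists m, (M <= m)%nat /\ c < b m.
Proof.
intros Hb Hc; apply NNPP; intro Hno.
set (t := (c + 1) / 2).
assert (Hbelow : meets_windows (below b t) M 1).
{ apply cofinite_meets_windows; intros k Hk; unfold below.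
  destruct (Rlt_dec (b k) t) as [|Hge]; [reflexivity|].
  apply Rnot_lt_le in Hge; exfalso; apply Hno.
  exists k; split; [exact Hk | unfold t in Hge; lra]. }
assert (H := meets_windows_density_ge _ _ M 1 ltac:(lia) Hbelow
  (equidistributed_density_below b t Hb ltac:(unfold t; lra))).
simpl in H; rewrite Rinv_1 in H; unfold t in H; lra.
Qed.

Lemma equidistributed_cofinal_below (b : nat -> R) (s : R) (M : nat) :
  equidistributed b -> 0 < s <= 1 -> exists m, (M <= m)%nat /\ b m < s.
Proof.
intros Hb Hs; apply NNPP; intro Hno.
assert (Habove : meets_windows (fun k => negb (below b s k)) M 1).
{ apply cofinite_meets_windows; intros k Hk; unfold below.
  destruct (Rlt_dec (b k) s) as [Hlt|]; [|reflexivity].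
  exfalso; apply Hno; exists k; split; assumption. }
assert (H := meets_windows_density_ge _ _ M 1 ltac:(lia) Habove
  (has_density_compl _ _ (equidistributed_density_below b s Hb ltac:(lra)))).
simpl in H; rewrite Rinv_1 in H; lra.
Qed.

Lemma eventually_lt_one (b : nat -> R) :
  pairwise_distinct b -> (forall k, b k <= 1) ->
  exists L, forall k, (L <= k)%nat -> b k < 1.
Proof.
intros Hd Hle.
destruct (classic (exists p, b p = 1)) as [[p Hp]|Hnone].
- exists (S p); intros k Hk.
  destruct (Hle k) as [|Hk1]; [assumption|].
  exfalso; apply (Hd k p); [lia | congruence].
- exists O; intros k _.
  destruct (Hle k) as [|Hk1]; [assumption|].
  exfalso; apply Hnone; exists k; exact Hk1.
Qed.

Lemma interval_argmax (b : nat -> R) (L K : nat) :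
  (L <= K)%nat ->
  exists r, (L <= r <= K)%nat /\ forall j, (L <= j <= K)%nat -> b j <= b r.
Proof.
induction 1 as [|K HLK [r [Hr Hmax]]].
- exists L; split; [lia|]; intros j Hj; replace j with L by lia; lra.
- destruct (Rle_dec (b (S K)) (b r)) as [Hle|Hgt].
  + exists r; split; [lia|]; intros j Hj.
    destruct (Nat.eq_dec j (S K)) as [->|]; [exact Hle | apply Hmax; lia].
  + exists (S K); split; [lia|]; intros j Hj.
    destruct (Nat.eq_dec j (S K)) as [->|]; [lra|].
    specialize (Hmax j ltac:(lia)); lra.
Qed.

Lemma N_maximal_of_interval_max (b : nat -> R) (N L K r : nat) :
  pairwise_distinct b -> (N < r)%nat -> (L + N <= r)%nat -> (r + N <= K)%nat ->
  (forall j, (L <= j <= K)%nat -> b j <= b r) -> N_maximal b N r.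
Proof.
intros Hd HNr HLr HrK Hmax; split; [lia|]; intros j Hj Hjr.
destruct (Rle_lt_or_eq_dec _ _ (Hmax j ltac:(lia))) as [|Heq]; [assumption|].
exfalso; exact (Hd j r Hjr Heq).
Qed.

Lemma windows_above_of_no_N_maximal (b : nat -> R) (N : nat) (t : R) :
  (0 < N)%nat -> pairwise_distinct b -> (forall k, b k <= 1) ->
  (forall c M, 0 <= c < 1 -> exists m, (M <= m)%nat /\ c < b m) ->
  (forall i, ~ N_maximal b N i) -> 0 <= t < 1 ->
  exists K0, forall K, (K0 <= K)%nat ->
    exists k, (K <= k < K + N)%nat /\ t < b k.
Proof.
intros HN Hd Hle Hcofinal Hno Ht.
destruct (eventually_lt_one b Hd Hle) as [L0 HL0].
set (L := (L0 + N + 1)%nat).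
destruct (interval_argmax b L (L + N - 1) ltac:(lia)) as [r0 [Hr0 Hmax0]].
(* A level [c] above the first window [L, L + N) keeps every later interval
   maximum at least N steps to the right of [L]; [c < 1] needs [b < 1] there. *)
set (c := Rmax t (b r0)).
assert (Htc : t <= c) by apply Rmax_l.
assert (Hr0c : b r0 <= c) by apply Rmax_r.
assert (Hc : 0 <= c < 1).
{ split; [lra|]; apply Rmax_lub_lt; [lra | apply HL0; unfold L in Hr0; lia]. }
destruct (Hcofinal c (L + N)%nat Hc) as [m [Hm Hcm]].
exists m; intros K HK.
destruct (interval_argmax b L (K + N - 1) ltac:(lia)) as [r [Hr Hmax]].
assert (Hcr : c < b r) by (specialize (Hmax m ltac:(lia)); lra).
assert (HLr : (L + N <= r)%nat).
{ destruct (Nat.le_gt_cases (L + N) r) as [|Hlt]; [assumption|].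
  specialize (Hmax0 r ltac:(lia)); lra. }
destruct (Nat.le_gt_cases (r + N) (K + N - 1)) as [Hin|Hout].
- exfalso; apply (Hno r).
  apply (N_maximal_of_interval_max b N L (K + N - 1)); auto; unfold L in *; lia.
- exists r; split; [lia | lra].
Qed.

Lemma inv_double_lt_inv (N : nat) :
  (0 < N)%nat -> 0 < / (2 * INR N) <= 1 / 2 /\ / (2 * INR N) < / INR N.
Proof.
intro HN; assert (HN1 : 1 <= INR N) by (apply (le_INR 1); lia).
split; [split|].
- apply Rinv_0_lt_compat; lra.
- unfold Rdiv; rewrite Rmult_1_l; apply Rinv_le_contravar; lra.
- apply Rinv_lt_contravar; nra.
Qed.

Lemma equidistributed_exists_N_maximal (b : nat -> R) (N : nat) :
  (0 < N)%nat -> pairwise_distinct b -> equidistributed b ->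
  exists i, N_maximal b N i.
Proof.
intros HN Hd Hb; apply NNPP; intro Hno.
destruct (inv_double_lt_inv N HN) as [Hs Hsl].
set (t := 1 - / (2 * INR N)).
destruct (windows_above_of_no_N_maximal b N t HN Hd
  (fun k => proj2 (proj1 Hb k)) (fun c M => equidistributed_cofinal_above b c M Hb)
  (fun i Hi => Hno (ex_intro _ i Hi)) ltac:(unfold t; lra)) as [K0 HK0].
assert (Hwin : meets_windows (fun k => negb (below b t k)) K0 N).
{ intros K HK; destruct (HK0 K HK) as [k [Hk Htk]]; exists k; split; [exact Hk|].
  unfold below; destruct (Rlt_dec (b k) t); [lra | reflexivity]. }
assert (H := meets_windows_density_ge _ _ K0 N HN Hwin
  (has_density_compl _ _ (equidistributed_density_below b t Hb ltac:(unfold t; lra)))).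
unfold t in H; lra.
Qed.

Lemma N_minimal_of_N_maximal_one_minus (b : nat -> R) (N i : nat) :
  N_maximal (fun k => 1 - b k) N i -> N_minimal b N i.
Proof.
intros [Hi Hmax]; split; [exact Hi|]; intros j Hj Hji.
specialize (Hmax j Hj Hji); simpl in Hmax; lra.
Qed.

Lemma equidistributed_exists_N_minimal (b : nat -> R) (N : nat) :
  (0 < N)%nat -> pairwise_distinct b -> equidistributed b ->
  exists i, N_minimal b N i.
Proof.
intros HN Hd Hb; apply NNPP; intro Hno.
destruct (inv_double_lt_inv N HN) as [Hs Hsl].
set (s := / (2 * INR N)).
assert (Hd' : pairwise_distinct (fun k => 1 - b k)).
{ intros i j Hij Heq; apply (Hd i j Hij); lra. }
assert (Hle' : forall k, 1 - b k <= 1) by (intro k; destruct (proj1 Hb k); lra).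
assert (Hcofinal : forall c M, 0 <= c < 1 ->
  exists m, (M <= m)%nat /\ c < 1 - b m).
{ intros c M Hc; destruct (equidistributed_cofinal_below b (1 - c) M Hb ltac:(lra))
    as [m [Hm Hbm]]; exists m; split; [exact Hm | lra]. }
destruct (windows_above_of_no_N_maximal (fun k => 1 - b k) N (1 - s) HN Hd'
  Hle' Hcofinal
  (fun i Hi => Hno (ex_intro _ i (N_minimal_of_N_maximal_one_minus b N i Hi)))
  ltac:(unfold s; lra)) as [K0 HK0].
assert (Hwin : meets_windows (below b s) K0 N).
{ intros K HK; destruct (HK0 K HK) as [k [Hk Hsk]]; exists k; split; [exact Hk|].
  unfold below; destruct (Rlt_dec (b k) s); [reflexivity | lra]. }
assert (H := meets_windows_density_ge _ _ K0 N HN Hwin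
  (equidistributed_density_below b s Hb ltac:(unfold s; lra))).
unfold s in H; lra.
Qed.

Lemma same_order_pairwise_distinct (a b : nat -> R) :
  same_order a b -> pairwise_distinct a -> pairwise_distinct b.
Proof.
intros Hso Hd i j Hij Heq.
destruct (Rtotal_order (a i) (a j)) as [Hlt|[Heqa|Hgt]].
- apply Hso in Hlt; lra.
- exact (Hd i j Hij Heqa).
- apply Hso in Hgt; lra.
Qed.

Lemma same_order_N_maximal (a b : nat -> R) (N i : nat) :
  same_order a b -> N_maximal b N i -> N_maximal a N i.
Proof.
intros Hso [Hi Hmax]; split; [exact Hi|].
intros j Hj Hji; apply Hso, Hmax; assumption.
Qed.

Lemma same_order_N_minimal (a b : nat -> R) (N i : nat) :
  same_order a b -> N_minimal b N i -> N_minimal a N i.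
Proof.
intros Hso [Hi Hmin]; split; [exact Hi|].
intros j Hj Hji; apply Hso, Hmin; assumption.
Qed.

Theorem proposition2 (a : nat -> R) :
  pairwise_distinct a -> equidistributed_perm a ->
  forall N : nat, (N > 0)%nat ->
    (exists i : nat, N_maximal a N i) /\ (exists i : nat, N_minimal a N i).
Proof.
intros Hd [b [Hb Hso]] N HN.
assert (Hdb := same_order_pairwise_distinct a b Hso Hd).
split.
- destruct (equidistributed_exists_N_maximal b N HN Hdb Hb) as [i Hi].
  exists i; exact (same_order_N_maximal a b N i Hso Hi).
- destruct (equidistributed_exists_N_minimal b N HN Hdb Hb) as [i Hi].
  exists i; exact (same_order_N_minimal a b N i Hso Hi).
Qed.
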